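(* Let $\mathcal A$ be a $p$-S-ring over a finite $p$-group $H$, let $K\le H$ be an $\mathcal A$-subgroup of index $p$, and let $T\in\mathrm{Bs}(\mathcal A)$. Then: (i) $T$ is contained in a single coset of $K$; in particular $\mathrm{rad}(T)\le K$. (ii) If $L\le H$ is an $\mathcal A$-subgroup of order $p$ with $L\trianglelefteq H$ and $L\not\le\mathrm{rad}(T)$, then $hL\cap T=Lh\cap T=\{h\}$ for every $h\in T$. (iii) If $H$ is abelian and $|O(\mathcal A)\cap K|\cdot|T|>|H|/p$, then $O(\mathcal A)\cap\mathrm{rad}(T)\ne\{1\}$.
   Context: An S-ring over $H$ is a subalgebra $\mathcal A\subseteq\mathbb{Q}H$ spanned by $\underline{T}=\sum_{t\in T}t$ for $T$ in a partition $\mathrm{Bs}(\mathcal A)$ of $H$ (basic sets) with $\{1\}\in\mathrm{Bs}(\mathcal A)$ and $T^{-1}\in\mathrm{Bs}(\mathcal A)$ for all $T$. A subgroup $K$ is an $\mathcal A$-subgroup if $\underline K\in\mathcal A$. $\mathrm{rad}(S)=\{h\in H:hS=Sh=S\}$. The thin radical is $O(\mathcal A)=\{h\in H:\{h\}\in\mathrm{Bs}(\mathcal A)\}$. $\mathcal A$ is a $p$-S-ring if $H$ is a $p$-group and every basic set has $p$-power size. *)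

From mathcomp Require Import all_boot all_fingroup all_solvable.
Set Implicit Arguments. Unset Strict Implicit. Unset Printing Implicit Defensive.
Local Open Scope group_scope.

Definition set_inv (gT : finGroupType) (T : {set gT}) : {set gT} :=
  [set x^-1 | x in T].

(* Coefficient of x in the group-algebra product (sum T)(sum S). *)
Definition prod_coef (gT : finGroupType) (T S : {set gT}) (x : gT) : nat :=
  #|[set ts : gT * gT | [&& ts.1 \in T, ts.2 \in S & ts.1 * ts.2 == x]]|.

(* P is the set of basic sets of an S-ring over H:
   a partition of H, {1} is basic, closed under inversion, and the
   Q-span of the sums of basic sets is closed under multiplication
   (i.e. the coefficients of each product of basic-set sums are constant
   on every basic set).  The span contains 1 = sum {1}. *)
Definition is_Sring (gT : finGroupType) (H : {set gT}) (P : {set {set gT}}) :=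
  [/\ partition P H,
      [set 1] \in P,
      forall T, T \in P -> set_inv T \in P &
      forall T S U x y, T \in P -> S \in P -> U \in P -> x \in U -> y \in U ->
        prod_coef T S x = prod_coef T S y].

Definition is_pSring (p : nat) (gT : finGroupType) (H : {set gT})
    (P : {set {set gT}}) :=
  [/\ prime p, p.-group H, is_Sring H P & forall T, T \in P -> p.-nat #|T|].

(* K is an A-subgroup: sum K lies in the S-ring, i.e. K is a union of
   basic sets. *)
Definition is_Asubgroup (gT : finGroupType) (P : {set {set gT}}) (K : {set gT}) :=
  K = cover [set T in P | T \subset K].

Definition rad (gT : finGroupType) (H S : {set gT}) : {set gT} :=
  [set h in H | (h *: S == S) && (S :* h == S)].

Definition thin_rad (gT : finGroupType) (H : {set gT}) (P : {set {set gT}}) :=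
  [set h in H | [set h] \in P].

From mathcomp Require Import all_boot all_fingroup all_solvable.
Set Implicit Arguments. Unset Strict Implicit. Unset Printing Implicit Defensive.
Local Open Scope group_scope.

(* If K is an A-subgroup, the coefficient of x in (sum T)(sum K) is #|T :&: x *: K|,
   so it is constant on the basic set T: T splits into equally large pieces along
   the cosets of K, and both the size and the number of these pieces are powers of p.
   (i) T avoids K unless T lies in K, so T meets fewer than p cosets of K, hence
   only one.  (ii) The pieces T :&: h *: L have 1 or p elements; p elements would
   make T a union of L-cosets and put L inside rad T.  (iii) The translates g *: T,
   g in O(A) :&: K, are basic sets inside the coset of K containing T; they are
   pairwise distinct, hence disjoint, as soon as O(A) :&: rad T = 1, which gives
   #|O(A) :&: K| * #|T| <= #|K| = #|H| %/ p. *)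

Lemma pnat_le_prime p n : prime p -> p.-nat n -> n <= p -> n = 1%N \/ n = p.
Proof.
move=> pr /p_natP[[|[|k]] ->]; rewrite ?expn1; [by left | by right | move=> le].
by have := ltn_exp2l 1 k.+2 (prime_gt1 pr); rewrite expn1 ltnNge le.
Qed.

Section GroupSubsets.
Variable gT : finGroupType.
Implicit Types (A T : {set gT}) (H K L : {group gT}).

Lemma card_lcosetI_uniform K T c :
  {in T, forall y, #|T :&: y *: K| = c} ->
  #|T| = (#|[set T :&: y *: K | y in T]| * c)%N.
Proof.
move=> Tc; apply: card_uniform_partition.
  by move=> _ /imsetP[y yT ->]; apply: Tc.
have -> : [set T :&: y *: K | y in T] = preim_partition (fun y => y *: K) T.
  apply: eq_in_imset => y _; apply/setP => z; rewrite !inE eq_sym; congr (_ && _).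
  by apply/idP/eqP => [/lcoset_eqP|<-] //; rewrite lcoset_refl.
exact: preim_partitionP.
Qed.

Lemma rad_sub_lcoset H K T t : t \in T -> T \subset t *: K -> rad H T \subset K.
Proof.
move=> tT TtK; apply/subsetP => h; rewrite inE => /and3P[_ _ /eqP Th].
have: t * h \in t *: K by apply: (subsetP TtK); rewrite -Th mem_rcoset mulgK.
by rewrite mem_lcoset mulKg.
Qed.

Lemma lcoset_closed_sub_rad H L T :
  L <| H -> T \subset H -> {in T, forall y, y *: L \subset T} -> L \subset rad H T.
Proof.
move=> /andP[sLH nLH] sTH TL; apply/subsetP => l lL.
have lH := subsetP sLH l lL.
have sTl : T :* l \subset T.
  apply/subsetP => _ /rcosetP[y yT ->]; apply: (subsetP (TL y yT)).
  by rewrite mem_lcoset mulKg.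
have slT : l *: T \subset T.
  apply/subsetP => z; rewrite mem_lcoset => lzT; apply: (subsetP (TL _ lzT)).
  rewrite mem_lcoset invMg invgK -mulgA -conjgE memJ_norm // (subsetP nLH) //.
  by rewrite -(mulKVg l z) groupM // (subsetP sTH).
by rewrite inE lH !eqEcard slT sTl card_lcoset card_rcoset !leqnn.
Qed.

Lemma cent_rlcoset A x : x \in 'C(A) -> A :* x = x *: A.
Proof.
move=> cAx; rewrite -rcosetE -lcosetE; apply: eq_in_imset => y yA.
by rewrite /= (centP cAx y yA).
Qed.

Lemma prod_coefE T S z : prod_coef T S z = #|[set s in S | z * s^-1 \in T]|.
Proof.
have inj : injective (fun s => (z * s^-1, s)) by move=> s1 s2 [].
rewrite /prod_coef -(card_imset _ inj); apply: eq_card => -[t s].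
rewrite !inE /=; apply/idP/imsetP => [/and3P[tT sS /eqP <-] | [s'] ].
  by exists s; rewrite ?inE ?sS ?mulgK.
by rewrite inE => /andP[sS tT] [-> ->]; rewrite tT sS mulgKV eqxx.
Qed.

Lemma prod_coef_cover T Q z :
  trivIset Q -> prod_coef T (cover Q) z = \sum_(S in Q) prod_coef T S z.
Proof.
move=> tiQ; rewrite prod_coefE -sum1dep_card big_trivIset_cond //.
by apply: eq_bigr => S _; rewrite prod_coefE -sum1dep_card.
Qed.

Lemma prod_coef_lcoset K T z : prod_coef T K z = #|T :&: z *: K|.
Proof.
have inj : injective (fun s => z * s^-1) by move=> s1 s2 /mulgI/invg_inj.
rewrite prod_coefE -(card_imset _ inj); apply: eq_card => t.
rewrite !inE; apply/imsetP/andP => [[s] | [tT]].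
  by rewrite inE => /andP[sK sT] ->; rewrite mem_lcoset mulKg groupV.
have e : z * (t^-1 * z)^-1 = t by rewrite invMg invgK mulKVg.
rewrite mem_lcoset => ztK; exists (t^-1 * z); last by rewrite e.
by rewrite inE e tT andbT -groupV invMg invgK.
Qed.

Lemma prod_coef_gt0 T S z : (0 < prod_coef T S z) = (z \in T * S).
Proof.
rewrite card_gt0; apply/set0Pn/mulsgP => [[[t s]] | [t s tT sS ->]].
  by rewrite inE /= => /and3P[tT sS /eqP <-]; exists t s.
by exists (t, s); rewrite inE /= tT sS eqxx.
Qed.

End GroupSubsets.

Section SRing.
Variables (gT : finGroupType) (H : {group gT}) (P : {set {set gT}}).
Hypothesis sr : is_Sring H P.
Implicit Types (A S T U : {set gT}) (K L : {group gT}).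

Lemma Sring_trivIset : trivIset P.
Proof. by case: sr => /and3P[]. Qed.

Lemma basic_sub S : S \in P -> S \subset H.
Proof. by case: sr => /and3P[/eqP <- _ _] _ _ _ SP; apply: bigcup_sup SP. Qed.

Lemma basic_neq0 S : S \in P -> S != set0.
Proof. by case: sr => /and3P[_ _ P0] _ _ _ SP; apply: contraNneq P0 => <-. Qed.

Lemma basic_eq S U z : S \in P -> U \in P -> z \in S -> z \in U -> S = U.
Proof.
move=> SP UP zS zU.
by rewrite -(def_pblock Sring_trivIset SP zS) (def_pblock Sring_trivIset UP zU).
Qed.

Lemma basic_sub_Asubgroup (K : {set gT}) S z :
  is_Asubgroup P K -> S \in P -> z \in S -> z \in K -> S \subset K.
Proof.
move=> KA SP zS; rewrite {1}KA => /bigcupP[U]; rewrite inE => /andP[UP UK] zU.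
by rewrite (basic_eq SP UP zS zU).
Qed.

Lemma mem_mul_basic T S U x y :
  T \in P -> S \in P -> U \in P -> x \in U -> y \in U -> (x \in T * S) = (y \in T * S).
Proof.
case: sr => _ _ _ coefU TP SP UP xU yU.
by rewrite -!prod_coef_gt0 (coefU T S U x y).
Qed.

Lemma thin_inv_basic a : [set a] \in P -> [set a^-1] \in P.
Proof. by case: sr => _ _ invP _ /invP; rewrite /set_inv imset_set1. Qed.

Lemma thin_mul_basic a S : [set a] \in P -> S \in P -> a *: S \in P.
Proof.
move=> aP SP; have /set0Pn[y yS] := basic_neq0 SP.
have ayH : a * y \in cover P.
  case: sr => /and3P[/eqP -> _ _] _ _ _.
  by rewrite groupM ?(subsetP (basic_sub SP) y) ?(subsetP (basic_sub aP) a) ?set11.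
have UP := pblock_mem ayH.
have ayU : a * y \in pblock P (a * y) by rewrite mem_pblock.
suff -> : a *: S = pblock P (a * y) by [].
apply/eqP; rewrite eqEsubset; apply/andP; split; apply/subsetP => z.
  rewrite mem_lcoset => zS; have := mem_mul_basic (thin_inv_basic aP) UP SP yS zS.
  by rewrite !mem_lcoset invgK mulKVg => <-.
by move=> zU; rewrite (mem_mul_basic aP SP UP zU ayU) mem_lcoset mulKg.
Qed.

Lemma thin_radM : {in thin_rad H P &, forall x y, x * y \in thin_rad H P}.
Proof.
move=> x y; rewrite !inE => /andP[xH xP] /andP[yH yP].
by rewrite groupM // -mulg_set1 thin_mul_basic.
Qed.

Lemma thin_radV : {in thin_rad H P, forall x, x^-1 \in thin_rad H P}.
Proof. by move=> x; rewrite !inE groupV => /andP[-> /thin_inv_basic]. Qed.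

Lemma card_basic_lcosetI K T x y : is_Asubgroup P K -> T \in P ->
  x \in T -> y \in T -> #|T :&: x *: K| = #|T :&: y *: K|.
Proof.
move=> KA TP xT yT; have [_ _ _ coefU] := sr.
have tiK : trivIset [set S in P | S \subset K].
  by apply: trivIsetS Sring_trivIset; apply/subsetP => S; rewrite inE => /andP[].
rewrite -!prod_coef_lcoset KA !prod_coef_cover //.
apply: eq_bigr => S; rewrite inE => /andP[SP _].
exact: (coefU _ _ _ _ _ TP SP TP xT yT).
Qed.

Section PSring.
Variable p : nat.
Hypotheses (pr : prime p) (pT : forall T, T \in P -> p.-nat #|T|).

Lemma basic_sub_lcoset K T t : K \subset H -> #|H : K| = p ->
  is_Asubgroup P K -> T \in P -> t \in T -> T \subset t *: K.
Proof.
move=> sKH iK KA TP tT.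
have [TK | TnK] := boolP (T \subset K); first by rewrite lcoset_id ?(subsetP TK).
set Q := [set T :&: y *: K | y in T].
have cardT : #|T| = (#|Q| * #|T :&: t *: K|)%N.
  by apply: card_lcosetI_uniform => y yT; apply: card_basic_lcosetI.
have Qp : p.-nat #|Q| by apply: pnat_dvd (pT TP); rewrite cardT dvdn_mulr.
have TKs : [set y *: K | y in T] \proper lcosets K H.
  apply/properP; split.
    apply/subsetP => _ /imsetP[y yT ->].
    by rewrite -lcosetE imset_f ?(subsetP (basic_sub TP)).
  exists (K : {set gT}); first by apply/imsetP; exists 1; rewrite ?lcosetE ?lcoset1.
  apply/imsetP => -[y yT Ky]; case/negP: TnK.
  by apply: basic_sub_Asubgroup KA TP yT _; rewrite Ky lcoset_refl.
have Qlt : #|Q| < p.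
  rewrite -iK -card_lcosets; apply: leq_ltn_trans (proper_card TKs).
  have -> : Q = setI T @: [set y *: K | y in T] by rewrite -imset_comp.
  exact: leq_imset_card.
have [Q1 | Qp'] := pnat_le_prime pr Qp (ltnW Qlt); last by rewrite Qp' ltnn in Qlt.
suff <- : T :&: t *: K = T by apply: subsetIr.
by apply/eqP; rewrite eqEcard subsetIl cardT Q1 mul1n leqnn.
Qed.

Lemma basic_lcosetI_normal L T h : L <| H -> #|L| = p -> is_Asubgroup P L ->
  ~~ (L \subset rad H T) -> T \in P -> h \in T -> h *: L :&: T = [set h].
Proof.
move=> nLH cL LA nLrT TP hT; set b := #|T :&: h *: L|.
have Tb y : y \in T -> #|T :&: y *: L| = b by move=> yT; apply: card_basic_lcosetI.
have bp : p.-nat b.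
  by apply: pnat_dvd (pT TP); rewrite (card_lcosetI_uniform Tb) dvdn_mull.
have ble : b <= p by rewrite -cL -(card_lcoset L h); apply/subset_leq_card/subsetIr.
have [b1 | bp'] := pnat_le_prime pr bp ble.
  apply/eqP; rewrite setIC eq_sym eqEcard sub1set !inE hT lcoset_refl cards1.
  by rewrite -/b b1.
case/negP: nLrT; apply: lcoset_closed_sub_rad nLH (basic_sub TP) _ => y yT.
suff <- : T :&: y *: L = y *: L by apply: subsetIl.
by apply/eqP; rewrite eqEcard subsetIr card_lcoset cL Tb // bp' leqnn.
Qed.

End PSring.

Lemma card_mul_thin_basic A T : abelian H -> T \in P ->
  A \subset thin_rad H P -> thin_rad H P :&: rad H T = 1 ->
  #|A * T| = (#|A| * #|T|)%N.
Proof.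
move=> abH TP sAO OrT1.
have -> : A * T = uncurry (fun g t : gT => g * t) @: setX A T by rewrite -curry_imset2X.
rewrite -cardsX; apply: card_in_imset => -[g t] [g' t'].
rewrite !inE /= => /andP[gA tT] /andP[g'A t'T] gt.
have gO := subsetP sAO g gA; have g'O := subsetP sAO g' g'A.
set u := g'^-1 * g.
have uO : u \in thin_rad H P by rewrite thin_radM ?thin_radV.
have /setIdP[uH uP] := uO.
have uT : u *: T = T.
  apply: basic_eq (thin_mul_basic uP TP) TP _ t'T.
  by rewrite mem_lcoset /u invMg invgK -mulgA -gt mulKg.
have cTu : u \in 'C(T).
  by apply: subsetP uH; rewrite (subset_trans abH) ?centS ?basic_sub.
have : u \in thin_rad H P :&: rad H T by rewrite inE uO inE uH cent_rlcoset // uT eqxx.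
rewrite OrT1 inE -eq_mulVg1 => /eqP g'g.
by move: gt; rewrite g'g => /mulgI ->.
Qed.

End SRing.

Theorem lemma2p18 (p : nat) (gT : finGroupType) (H : {group gT})
  (P : {set {set gT}}) (K : {group gT}) (T : {set gT}) :
  is_pSring p H P ->
  K \subset H -> #|H : K| = p -> is_Asubgroup P K ->
  T \in P ->
  [/\ (exists2 x, x \in H & T \subset x *: K) /\ rad H T \subset K,
      forall L : {group gT},
        L \subset H -> #|L| = p -> is_Asubgroup P L -> L <| H ->
        ~~ (L \subset rad H T) ->
        forall h, h \in T ->
          (h *: L) :&: T = [set h] /\ (L :* h) :&: T = [set h]
    & abelian H ->
      #|H| %/ p < #|thin_rad H P :&: K| * #|T| ->
      thin_rad H P :&: rad H T != 1 ].
Proof.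
case=> pr _ sr pT sKH iK KA TP; have /set0Pn[t tT] := basic_neq0 sr TP.
have tH : t \in H := subsetP (basic_sub sr TP) t tT.
have TtK := basic_sub_lcoset sr pr pT sKH iK KA TP tT.
split.
- by split; [exists t | apply: rad_sub_lcoset tT TtK].
- move=> L _ cL LA nLH nLrT h hT.
  have hL := basic_lcosetI_normal sr pr pT nLH cL LA nLrT TP hT.
  have hH := subsetP (basic_sub sr TP) h hT.
  by rewrite norm_rlcoset ?hL // (subsetP (normal_norm nLH)).
- move=> abH; apply: contraTneq => OrT1; rewrite -leqNgt -iK divg_indexS //.
  rewrite -(card_mul_thin_basic sr abH TP (subsetIl _ _) OrT1) -(card_rcoset K t).
  have tN : t \in 'N(K) := subsetP (sub_abelian_norm abH sKH) t tH.
  apply/subset_leq_card/(subset_trans (mulgSS (subsetIr _ _) TtK)).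
  by rewrite -norm_rlcoset // mulgA mulGid.
Qed.
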